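(* In the setting of the context, assume every irreducible $T$-module is thin, and let $\mathbf{C}\in T$ be the unique element satisfying the three equations $$\mathbf{A}+\frac{q\mathbf{B}\mathbf{C}-q^{-1}\mathbf{C}\mathbf{B}}{q^2-q^{-2}}=\frac{(\mathbf{a}+\mathbf{a}^{-1})(\Lambda+\Lambda^{-1})+(\mathbf{b}+\mathbf{b}^{-1})(\mathbf{c}+\mathbf{c}^{-1})}{q+q^{-1}},$$ $$\mathbf{B}+\frac{q\mathbf{C}\mathbf{A}-q^{-1}\mathbf{A}\mathbf{C}}{q^2-q^{-2}}=\frac{(\mathbf{b}+\mathbf{b}^{-1})(\Lambda+\Lambda^{-1})+(\mathbf{c}+\mathbf{c}^{-1})(\mathbf{a}+\mathbf{a}^{-1})}{q+q^{-1}},$$ $$\mathbf{C}+\frac{q\mathbf{A}\mathbf{B}-q^{-1}\mathbf{B}\mathbf{A}}{q^2-q^{-2}}=\frac{(\mathbf{c}+\mathbf{c}^{-1})(\Lambda+\Lambda^{-1})+(\mathbf{a}+\mathbf{a}^{-1})(\mathbf{b}+\mathbf{b}^{-1})}{q+q^{-1}}.$$ Then each of $$\mathbf{A}+\frac{q\mathbf{B}\mathbf{C}-q^{-1}\mathbf{C}\mathbf{B}}{q^2-q^{-2}},\quad \mathbf{B}+\frac{q\mathbf{C}\mathbf{A}-q^{-1}\mathbf{A}\mathbf{C}}{q^2-q^{-2}},\quad \mathbf{C}+\frac{q\mathbf{A}\mathbf{B}-q^{-1}\mathbf{B}\mathbf{A}}{q^2-q^{-2}}$$ is central in $T$.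
   Context: Fix a nonzero $q\in\mathbb{C}$ with $q^4\neq1$. Let $\Gamma$ be a finite connected distance-regular graph (undirected, no loops or multiple edges) with vertex set $X$, distance $\partial$, diameter $D\ge3$; $V=\mathbb{C}^X$. $A$ is the adjacency matrix, $E_0,\dots,E_D$ the primitive idempotents of the Bose–Mesner algebra with $E_0=|X|^{-1}J$ and $E_1,\dots,E_D$ a $Q$-polynomial ordering; $A=\sum\theta_iE_i$. Fix a vertex $x$; $E_i^*$ is the diagonal $0/1$ matrix projecting onto vertices at distance $i$ from $x$; $A^*$ is diagonal with $(y,y)$-entry $|X|(E_1)_{xy}$, $A^*=\sum\theta_i^*E_i^*$; $T$ is the algebra generated by $A,A^*$. Assume $q$-Racah type: $\theta_i=w+uq^{2i-D}+vq^{D-2i}$, $\theta_i^*=w^*+u^*q^{2i-D}+v^*q^{D-2i}$, $u,u^*,v,v^*\neq0$; fix $a,b$ with $a^2=u/v$, $b^2=u^*/v^*$; $\mathbf{A}=(A-wI)/(av)$, $\mathbf{B}=(A^*-w^*I)/(bv^* )$. For an irreducible $T$-module $W\subseteq V$: endpoint $\rho=\min\{i:E_i^*W\ne0\}$, dual endpoint $\tau=\min\{i:E_iW\neq0\}$, diameter $d=|\{i:E^*_iW\ne0\}|-1$; thin means $\dim E^*_iW\le1$ for all $i$. Put $a(W)=aq^{2\tau+d-D}$, $b(W)=bq^{2\rho+d-D}$. If $W$ is thin, $(\mathbf{A}|_W,\{E_{\tau+i}|_W\}_{i=0}^d,\mathbf{B}|_W,\{E^*_{\rho+i}|_W\}_{i=0}^d)$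 is a Leonard system with eigenvalues $\vartheta_i=a(W)q^{2i-d}+a(W)^{-1}q^{d-2i}$ and dual eigenvalues $\vartheta^*_i=b(W)q^{2i-d}+b(W)^{-1}q^{d-2i}$; let $\kappa=0$ if $d=0$ and, for $d\ge1$, $\kappa=a(W)b(W)^{-1}q^{d-1}+a(W)^{-1}b(W)q^{1-d}+\phi_1/((q-q^{-1})(q^d-q^{-d}))$ where $\phi_1=(\vartheta^*_0-\vartheta^*_1)(\mathrm{trace}(E^*_\rho\mathbf{A}|_W)-\vartheta_d)$; $c(W)$ is a root of $\xi^2-\kappa\xi+1=0$ (defined up to reciprocal). Isomorphism of irreducible modules: linear bijection commuting with $T$; $\Psi$ = set of types; for $\psi\in\Psi$, $a(\psi),b(\psi),d(\psi),c(\psi)$ are $a(W),b(W)$, the diameter, and (a fixed choice of) $c(W)$ for $W$ of type $\psi$. $V_\psi$ = span of irreducible modules of type $\psi$, $V=\bigoplus_\psi V_\psi$, $e_\psi$ = identity on $V_\psi$, $0$ on other $V_\lambda$. Define $\mathbf{a}=\sum_\psi a(\psi)e_\psi$, $\mathbf{b}=\sum_\psi b(\psi)e_\psi$, $\mathbf{c}=\sum_\psi c(\psi)e_\psi$, $\Lambda=\sum_\psi q^{d(\psi)+1}e_\psi$ (these are invertible). *)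

From HB Require Import structures.
From mathcomp Require Import all_boot all_order all_algebra.
From mathcomp Require Import complex.
From mathcomp Require Import Rstruct.

Set Implicit Arguments.
Unset Strict Implicit.
Unset Printing Implicit Defensive.

Import Order.TTheory GRing.Theory Num.Theory.
Local Open Scope ring_scope.

Notation CC := (Rdefinitions.R[i]).

Section Graph.
Variable n : nat.
Variable adj : rel 'I_n.

(* undirected, no loops (no multiple edges is automatic for a relation) *)
Definition simple_graph : Prop := symmetric adj /\ irreflexive adj.

Fixpoint reach (k : nat) (y z : 'I_n) : bool :=
  match k with
  | 0 => y == z
  | k'.+1 => [exists t, adj y t && reach k' t z]
  end.

Definition connected_graph : Prop := forall y z, exists k, reach k y z.

(* path-length distance: the least k with a walk of length k from y to z
   (in a connected graph on n vertices this is < n) *)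
Definition dist (y z : 'I_n) : nat := find (fun k => reach k y z) (iota 0 n).

Definition diameter : nat := \max_(y : 'I_n) \max_(z : 'I_n) dist y z.

Definition distance_regular : Prop :=
  forall (i j : nat) (y z y' z' : 'I_n), dist y z = dist y' z' ->
    #|[set t | (dist y t == i) && (dist z t == j)]| =
    #|[set t | (dist y' t == i) && (dist z' t == j)]|.

Definition adjmx : 'M[CC]_n := \matrix_(y, z) (adj y z)%:R.
Definition distmx (i : nat) : 'M[CC]_n := \matrix_(y, z) (dist y z == i)%:R.

Definition inBM (M : 'M[CC]_n) : Prop :=
  exists c : nat -> CC, M = \sum_(i < diameter.+1) c i *: distmx i.

Definition BM_idempotent (F : 'M[CC]_n) : Prop := inBM F /\ F *m F = F.

Definition BM_primitive (E : 'M[CC]_n) : Prop :=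
  BM_idempotent E /\ E <> 0 /\
  forall F, BM_idempotent F -> F *m E = F -> F = 0 \/ F = E.

Definition primitive_idempotents (D : nat) (E : nat -> 'M[CC]_n) : Prop :=
  [/\ forall i, (i <= D)%N -> BM_primitive (E i),
      forall i j, (i <= D)%N -> (j <= D)%N -> E i = E j -> i = j,
      forall F, BM_primitive F -> exists2 i, (i <= D)%N & F = E i
    & E 0%N = (n%:R)^-1 *: const_mx 1].

Definition hadamard (M N : 'M[CC]_n) : 'M[CC]_n := \matrix_(y, z) (M y z * N y z).

Definition Q_polynomial (D : nat) (E : nat -> 'M[CC]_n) : Prop :=
  exists kr : nat -> nat -> nat -> CC,
    (forall i j, (i <= D)%N -> (j <= D)%N ->
       hadamard (E i) (E j) = (n%:R)^-1 *: \sum_(h < D.+1) kr h i j *: E h) /\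
    (forall h i j, (h <= D)%N -> (i <= D)%N -> (j <= D)%N ->
       ((i + j < h)%N \/ (h + j < i)%N \/ (h + i < j)%N -> kr h i j = 0) /\
       ((h = i + j)%N \/ (i = h + j)%N \/ (j = h + i)%N -> kr h i j != 0)).

Definition dual_idem (x : 'I_n) (i : nat) : 'M[CC]_n :=
  diag_mx (\row_z (dist x z == i)%:R).

Definition dual_adjmx (x : 'I_n) (E1 : 'M[CC]_n) : 'M[CC]_n :=
  diag_mx (\row_z (n%:R * E1 x z)).

End Graph.

(* Vectors of V = C^X are column vectors 'cV_n; a subspace W of V is   *)
(* represented (mxalgebra style) by a matrix U whose row space is      *)
(* { w^T : w \in W }.                                                  *)
Section Talg.
Variable n : nat.
Variables (A As : 'M[CC]_n).

Definition Tword (s : seq bool) : 'M[CC]_n :=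
  foldr (fun b M => (if b then A else As) *m M) 1%:M s.

Definition inT (M : 'M[CC]_n) : Prop :=
  exists s : seq (CC * seq bool), M = \sum_(p <- s) p.1 *: Tword p.2.

Definition central_in_T (M : 'M[CC]_n) : Prop :=
  inT M /\ forall N, inT N -> M *m N = N *m M.

Definition inW (U : 'M[CC]_n) (v : 'cV[CC]_n) : Prop := (v^T <= U)%MS.

(* U represents a T-module: M W \subseteq W for all M in T
   (M w in W  <->  w^T M^T in rowspace U) *)
Definition Tmodule (U : 'M[CC]_n) : Prop :=
  forall M, inT M -> (U *m M^T <= U)%MS.

Definition irreducible (U : 'M[CC]_n) : Prop :=
  [/\ Tmodule U, U != 0 &
      forall U' : 'M[CC]_n, Tmodule U' -> (U' <= U)%MS ->
        (U' == (0 : 'M[CC]_n))%MS \/ (U' == U)%MS].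

(* trace of the restriction to W of a linear map M with M W \subseteq W *)
Definition restr_trace (M U : 'M[CC]_n) : CC :=
  \tr (row_base U *m M^T *m pinvmx (row_base U)).

End Talg.

Section ModuleParams.
Variable n : nat.
Variables (D : nat) (E Es : nat -> 'M[CC]_n).

Definition dimEs (U : 'M[CC]_n) (i : nat) : nat := \rank (U *m (Es i)^T).
Definition dimE (U : 'M[CC]_n) (i : nat) : nat := \rank (U *m (E i)^T).

Definition endpoint (U : 'M[CC]_n) : nat :=
  find (fun i => dimEs U i != 0%N) (iota 0 D.+1).
Definition dual_endpoint (U : 'M[CC]_n) : nat :=
  find (fun i => dimE U i != 0%N) (iota 0 D.+1).
Definition mod_diameter (U : 'M[CC]_n) : nat :=
  (count (fun i => dimEs U i != 0%N) (iota 0 D.+1)).-1.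

Definition thin (U : 'M[CC]_n) : Prop := forall i, (dimEs U i <= 1)%N.

Variables (q a b : CC).

Definition aW (U : 'M[CC]_n) : CC :=
  a * q ^ ((2 * dual_endpoint U + mod_diameter U)%N%:Z - D%:Z).
Definition bW (U : 'M[CC]_n) : CC :=
  b * q ^ ((2 * endpoint U + mod_diameter U)%N%:Z - D%:Z).

Definition thW (U : 'M[CC]_n) (i : nat) : CC :=
  let d := mod_diameter U in
  aW U * q ^ ((2 * i)%N%:Z - d%:Z) + (aW U)^-1 * q ^ (d%:Z - (2 * i)%N%:Z).
Definition thsW (U : 'M[CC]_n) (i : nat) : CC :=
  let d := mod_diameter U in
  bW U * q ^ ((2 * i)%N%:Z - d%:Z) + (bW U)^-1 * q ^ (d%:Z - (2 * i)%N%:Z).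

Definition phi1 (bA U : 'M[CC]_n) : CC :=
  (thsW U 0 - thsW U 1) *
  (restr_trace (Es (endpoint U) *m bA) U - thW U (mod_diameter U)).

Definition kappa (bA U : 'M[CC]_n) : CC :=
  let d := mod_diameter U in
  if d == 0%N then 0 else
  aW U / bW U * q ^ (d%:Z - 1) + bW U / aW U * q ^ (1 - d%:Z) +
  phi1 bA U / ((q - q^-1) * (q ^+ d - q ^- d)).

End ModuleParams.

Definition normalize (n : nat) (M : 'M[CC]_n) (w s : CC) : 'M[CC]_n :=
  s^-1 *: (M - w%:M).

(* Each right-hand side acts on every irreducible T-module as a scalar, so it
   is central as soon as V is the sum of its irreducible T-submodules.  That
   holds because T is closed under conjugate transposition (A is real symmetric
   and the conjugate of the diagonal matrix A* is a polynomial in A* ), so the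
   orthogonal complement of a T-module is again a T-module.  Consequently an
   operator killing every irreducible T-module is zero; this yields both the
   invertibility of a, b, c, Lambda and the centrality. *)

From HB Require Import structures.
From mathcomp Require Import all_boot all_order all_algebra.
From mathcomp Require Import complex.
From mathcomp Require Import Rstruct.
From Stdlib Require Import Classical.
Import Order.TTheory GRing.Theory Num.Theory Num.Def.
Local Open Scope ring_scope.
Local Open Scope sesquilinear_scope.
Set Implicit Arguments.
Unset Strict Implicit.

Lemma trmxC_mul m p r (M : 'M[CC]_(m, p)) (N : 'M[CC]_(p, r)) :
  (M *m N) ^t* = N ^t* *m M ^t*.
Proof. by rewrite trmx_mul map_mxM. Qed.

Section TAlgebra.
Variable n : nat.
Variables (A As : 'M[CC]_n).
Local Notation inT := (inT A As).
Local Notation Tword := (Tword A As).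

Lemma Tword_cat s1 s2 : Tword (s1 ++ s2) = Tword s1 *m Tword s2.
Proof. by elim: s1 => [|b s IH] /=; rewrite ?mul1mx // IH mulmxA. Qed.

Lemma inT0 : inT 0.
Proof. by exists [::]; rewrite big_nil. Qed.

Lemma inTD M N : inT M -> inT N -> inT (M + N).
Proof. by move=> [s ->] [t ->]; exists (s ++ t); rewrite big_cat. Qed.

Lemma inTZ k M : inT M -> inT (k *: M).
Proof.
move=> [s ->]; exists [seq (k * p.1, p.2) | p <- s].
by rewrite big_map scaler_sumr; apply: eq_bigr => p _; rewrite scalerA.
Qed.

Lemma inTB M N : inT M -> inT N -> inT (M - N).
Proof. by move=> hM hN; rewrite -scaleN1r; apply/inTD/inTZ. Qed.

Lemma inT_sum m (F : 'I_m -> 'M[CC]_n) : (forall i, inT (F i)) -> inT (\sum_i F i).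
Proof. by move=> hF; elim/big_ind: _ => //; [exact: inT0 | exact: inTD]. Qed.

Lemma inT_Tword s : inT (Tword s).
Proof. by exists [:: (1, s)]; rewrite big_seq1 scale1r. Qed.

Lemma inTM M N : inT M -> inT N -> inT (M *m N).
Proof.
move=> [s ->] [t ->]; rewrite mulmx_suml; elim/big_ind: _ => //;
  [exact: inT0 | exact: inTD | move=> p _].
rewrite mulmx_sumr; elim/big_ind: _ => //; [exact: inT0 | exact: inTD | move=> r _].
by rewrite -scalemxAl -scalemxAr -Tword_cat; apply/inTZ/inTZ/inT_Tword.
Qed.

Lemma inT_A : inT A.
Proof. by have := inT_Tword [:: true]; rewrite /= mulmx1. Qed.

Lemma inT_As : inT As.
Proof. by have := inT_Tword [:: false]; rewrite /= mulmx1. Qed.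

Lemma inT_scalar c : inT c%:M.
Proof. by rewrite -scalemx1; apply/inTZ/(inT_Tword [::]). Qed.

Lemma inT_normalize M w s : inT M -> inT (normalize M w s).
Proof. by move=> hM; apply/inTZ/inTB/inT_scalar. Qed.

Lemma inT_add_qcommutator k q X Y Z : inT X -> inT Y -> inT Z ->
  inT (X + k *: (q *: (Y *m Z) - q^-1 *: (Z *m Y))).
Proof. by move=> hX hY hZ; apply/(inTD hX)/inTZ/inTB; apply/inTZ/inTM. Qed.

Lemma inT_trmxC : inT (A ^t*) -> inT (As ^t*) -> forall M, inT M -> inT (M ^t*).
Proof.
move=> hA hAs M [s ->]; rewrite !raddf_sum /=.
elim/big_ind: _ => //; [exact: inT0 | exact: inTD | move=> p _].
rewrite linearZ map_mxZ /=; apply: inTZ.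
elim: p.2 => [|b t IH] /=; first by rewrite trmx1 map_mx1; exact: inT_scalar.
by rewrite trmxC_mul; apply: inTM => //; case: b.
Qed.

End TAlgebra.

Local Notation "U ^!" := (orthomx conjC (mx_of_hermitian (hermitian1mx _)) U)
  (format "U ^!") : matrix_set_scope.

Section Semisimplicity.
Variable n : nat.
Variables (A As : 'M[CC]_n).
Local Notation inT := (inT A As).
Local Notation Tmodule := (Tmodule A As).
Local Notation irreducible := (irreducible A As).
Hypothesis inT_trmxC : forall M, inT M -> inT (M ^t*).

Lemma Tmodule_ortho U : Tmodule U -> Tmodule U^!%MS.
Proof.
move=> hU M hM; apply/orthomx1P; rewrite -mulmxA.
have /submxP [Y hY] := hU _ (inT_trmxC hM).
have -> : M^T *m U ^t* = U ^t* *m Y ^t*.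
  rewrite -trmxC_mul -hY trmxC_mul trmxK; congr (_ *m _).
  by apply/matrixP => i j; rewrite !mxE conjCK.
by rewrite mulmxA (orthomx1P (submx_refl _)) mul0mx.
Qed.

Lemma Tmodule_capmx U V : Tmodule U -> Tmodule V -> Tmodule (U :&: V)%MS.
Proof.
move=> hU hV M hM; rewrite sub_capmx.
rewrite (submx_trans (submxMr _ (capmxSl _ _)) (hU _ hM)).
by rewrite (submx_trans (submxMr _ (capmxSr _ _)) (hV _ hM)).
Qed.

Lemma reducible_Tmodule_split U : Tmodule U -> U != 0 -> ~ irreducible U ->
  exists U1 U2 : 'M[CC]_n,
    [/\ Tmodule U1, Tmodule U2, (\rank U1 < \rank U)%N, (\rank U2 < \rank U)%N
      & (U <= U1 + U2)%MS].
Proof.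
move=> hU Unz Ured.
have [U1 [hU1 sU1U U1nz U1neU]] : exists U1, [/\ Tmodule U1, (U1 <= U)%MS,
    ~~ (U1 == (0 : 'M[CC]_n))%MS & ~~ (U1 == U)%MS].
  apply: NNPP => hno; apply: Ured; split => // U1 hU1 sU1U.
  by apply: NNPP => /not_or_and [/negP U1nz /negP U1neU]; apply: hno; exists U1.
exists U1, (U1^! :&: U)%MS; split.
- exact: hU1.
- exact: Tmodule_capmx (Tmodule_ortho hU1) hU.
- by apply: rank_ltmx; rewrite ltmxEneq U1neU sU1U.
- apply: rank_ltmx; rewrite ltmxEneq capmxSr /=; apply: contra U1nz => sUU2.
  have sU1ortho : (U1 <= U1^!)%MS.
    exact: submx_trans sU1U (submx_trans sUU2 (capmxSl _ _)).
  by rewrite sub0mx andbT -(orthomx_ortho_disj U1) sub_capmx submx_refl.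
- by rewrite (matrix_modl U1^!%MS sU1U) sub_capmx submx_refl (addsmx_ortho U1) submx1.
Qed.

Lemma Tmodule_sub (S : 'M[CC]_n) : (forall U, irreducible U -> (U <= S)%MS) ->
  forall U, Tmodule U -> (U <= S)%MS.
Proof.
move=> hS U; have [k] := ubnP (\rank U); elim: k U => // k IH U ltUk hU.
have [->|Unz] := eqVneq U 0; first exact: sub0mx.
have [Uirr|Ured] := classic (irreducible U); first exact: hS.
have [U1 [U2 [hU1 hU2 ltU1 ltU2 sUU12]]] := reducible_Tmodule_split hU Unz Ured.
apply: submx_trans sUU12 _; rewrite addsmx_sub.
by rewrite !IH // -ltnS (leq_trans _ ltUk).
Qed.

Lemma eq0_of_irreducible_annihilator (K : 'M[CC]_n) :
  (forall U, irreducible U -> forall z, inW U z -> K *m z = 0) -> K = 0.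
Proof.
move=> hK; apply: trmx_inj; rewrite trmx0 -[K^T]mul1mx; apply/sub_kermxP.
apply: Tmodule_sub => [U hU|M _]; last exact: submx1.
apply/row_subP => i; apply/sub_kermxP.
by rewrite -[row i U]trmxK -trmx_mul (hK U) ?trmx0 // /inW trmxK row_sub.
Qed.

End Semisimplicity.

Definition scalar_on n (U X : 'M[CC]_n) (s : CC) : Prop :=
  forall z, inW U z -> X *m z = s *: z.

Section ScalarAction.
Variables (n : nat) (U : 'M[CC]_n).

Lemma scalar_onD X Y s t :
  scalar_on U X s -> scalar_on U Y t -> scalar_on U (X + Y) (s + t).
Proof. by move=> hX hY z hz; rewrite mulmxDl hX // hY // scalerDl. Qed.

Lemma scalar_onM X Y s t :
  scalar_on U X s -> scalar_on U Y t -> scalar_on U (X *m Y) (s * t).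
Proof. by move=> hX hY z hz; rewrite -mulmxA hY // -scalemxAr hX // scalerA mulrC. Qed.

Lemma scalar_onZ X k s : scalar_on U X s -> scalar_on U (k *: X) (k * s).
Proof. by move=> hX z hz; rewrite -scalemxAl hX // scalerA. Qed.

Lemma scalar_onV X s :
  X \in unitmx -> s != 0 -> scalar_on U X s -> scalar_on U (invmx X) s^-1.
Proof.
move=> Xu s0 hX z hz.
by rewrite -{1}[z](scale1r z) -(mulVf s0) -scalerA -hX // -scalemxAr mulKmx.
Qed.

Lemma scalar_on_addV X s : X \in unitmx -> s != 0 -> scalar_on U X s ->
  scalar_on U (X + invmx X) (s + s^-1).
Proof. by move=> Xu s0 hX; apply/scalar_onD/scalar_onV. Qed.
End ScalarAction.

Section ScalarOnIrreducibles.
Variable n : nat.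
Variables (A As : 'M[CC]_n).
Local Notation inT := (inT A As).
Local Notation irreducible := (irreducible A As).
Hypothesis inT_trmxC : forall M, inT M -> inT (M ^t*).

Definition irr_scalar_unit (X : 'M[CC]_n) : Prop :=
  forall U, irreducible U -> exists2 s, s != 0 & scalar_on U X s.

Lemma irr_scalar_unitmx X : irr_scalar_unit X -> X \in unitmx.
Proof.
move=> hX; rewrite -row_free_unit -kermx_eq0; apply/eqP.
apply: (eq0_of_irreducible_annihilator inT_trmxC) => U hU z hz.
have [s s0 hXs] := hX U hU.
rewrite -[z](scale1r z) -(mulVf s0) -scalerA -hXs // -scalemxAr.
by rewrite mulmxA mulmx_ker mul0mx scaler0.
Qed.

Lemma scalar_on_addV_combination k P Q R S :
  irr_scalar_unit P -> irr_scalar_unit Q -> irr_scalar_unit R -> irr_scalar_unit S ->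
  forall U, irreducible U -> exists s, scalar_on U
    (k *: ((P + invmx P) *m (Q + invmx Q) + (R + invmx R) *m (S + invmx S))) s.
Proof.
move=> hP hQ hR hS U hU.
have [p p0 hPp] := hP U hU; have [q q0 hQq] := hQ U hU.
have [r r0 hRr] := hR U hU; have [t t0 hSt] := hS U hU.
exists (k * ((p + p^-1) * (q + q^-1) + (r + r^-1) * (t + t^-1))).
by apply/scalar_onZ/scalar_onD; apply: scalar_onM;
  apply: scalar_on_addV; rewrite ?irr_scalar_unitmx.
Qed.

Lemma central_of_irr_scalar X : inT X ->
  (forall U, irreducible U -> exists s, scalar_on U X s) -> central_in_T A As X.
Proof.
move=> hX hXs; split => // N hN; apply/eqP; rewrite -subr_eq0; apply/eqP.
apply: (eq0_of_irreducible_annihilator inT_trmxC) => U hU z hz.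
have [s hXU] := hXs U hU.
have hNz : inW U (N *m z).
  case: hU => hUmod _ _; rewrite /inW trmx_mul.
  exact: submx_trans (submxMr _ hz) (hUmod _ hN).
by rewrite mulmxBl -!mulmxA !hXU // -scalemxAr subrr.
Qed.

End ScalarOnIrreducibles.

Lemma poly_interpolation (F : fieldType) (f : F -> F) (s : seq F) :
  exists p : {poly F}, {in s, forall x, p.[x] = f x}.
Proof.
elim: s => [|y s [p hp]]; first by exists 0.
have [ys|ys] := boolP (y \in s).
  by exists p => x; rewrite inE => /predU1P [->|]; apply: hp.
pose g := \prod_(z <- s) ('X - z%:P).
have gy : g.[y] != 0 by rewrite -rootE root_prod_XsubC.
exists (p + ((f y - p.[y]) / g.[y]) *: g) => x.
rewrite inE hornerD hornerZ => /predU1P [->|xs]; first by rewrite divfK // addrC subrK.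
have /rootP -> : root g x by rewrite root_prod_XsubC.
by rewrite mulr0 addr0 hp.
Qed.

Lemma inT_diag_map n (A : 'M[CC]_n) (r : 'rV[CC]_n) (f : CC -> CC) :
  inT A (diag_mx r) (diag_mx (map_mx f r)).
Proof.
have [p hp] := poly_interpolation f [seq r 0 z | z : 'I_n].
have Tword_diag i :
    Tword A (diag_mx r) (nseq i false) = diag_mx (map_mx (fun x : CC => x ^+ i) r).
  elim: i => [|i IH] /=; first by apply/matrixP => y z; rewrite !mxE expr0.
  rewrite IH mul_diag_mx; apply/matrixP => y z; rewrite !mxE exprS.
  by case: (y == z); rewrite ?mulr1n ?mulr0n ?mulr0.
have -> : diag_mx (map_mx f r) =
    \sum_(i < size p) p`_i *: Tword A (diag_mx r) (nseq i false).
  apply/matrixP => y z; rewrite summxE !mxE.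
  have [->|ne] := eqVneq y z; last first.
    by rewrite mulr0n big1 // => i _; rewrite Tword_diag !mxE (negbTE ne) mulr0n mulr0.
  rewrite -hp ?map_f ?mem_enum // horner_coef mulr1n.
  by apply: eq_bigr => i _; rewrite Tword_diag !mxE eqxx mulr1n.
by apply: inT_sum => i; apply/inTZ/inT_Tword.
Qed.

Lemma inT_adjmx_trmxC n (adj : rel 'I_n) (x : 'I_n) (E1 : 'M[CC]_n) :
  symmetric adj -> let A := adjmx adj in let As := dual_adjmx x E1 in
  forall M, inT A As M -> inT A As (M ^t*).
Proof.
move=> adj_sym A As; apply: inT_trmxC; last first.
  by rewrite /As /dual_adjmx tr_diag_mx map_diag_mx; apply: inT_diag_map.
suff -> : A ^t* = A by apply: inT_A.
by apply/matrixP => i j; rewrite !mxE conjC_nat adj_sym.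
Qed.

Lemma neq0_of_sqr_eq_div (F : fieldType) (c s t : F) :
  c ^+ 2 = s / t -> s != 0 -> t != 0 -> c != 0.
Proof.
move=> hc s0 t0; apply: contra_neq (mulf_neq0 s0 (invr_neq0 t0)) => c0.
by rewrite -hc c0 expr0n.
Qed.

Lemma neq0_of_reciprocal_root (F : fieldType) (c k : F) :
  c ^+ 2 - k * c + 1 = 0 -> c != 0.
Proof.
move=> hc; apply: contra_neq (oner_neq0 F) => c0.
by rewrite -hc c0 expr0n mulr0 subr0 add0r.
Qed.

Local Close Scope sesquilinear_scope.

Theorem theorem5p13
  (n : nat) (adj : rel 'I_n) (x : 'I_n) (D : nat) (E : nat -> 'M[CC]_n)
  (q w u v ws us vs a b : CC)
  (ba bb bc bL bC : 'M[CC]_n) :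
  (* distance-regular graph of diameter D >= 3 *)
  simple_graph adj -> connected_graph adj -> distance_regular adj ->
  diameter adj = D -> (3 <= D)%N ->
  (* E_0 = |X|^-1 J, E_1, ..., E_D primitive idempotents, Q-polynomial ordering *)
  primitive_idempotents adj D E -> Q_polynomial D E ->
  (* q nonzero, q^4 <> 1 *)
  q != 0 -> q ^+ 4 != 1 ->
  (* q-Racah type *)
  u != 0 -> us != 0 -> v != 0 -> vs != 0 ->
  adjmx adj = \sum_(i < D.+1)
      (w + u * q ^ ((2 * i)%N%:Z - D%:Z) + v * q ^ (D%:Z - (2 * i)%N%:Z)) *: E i ->
  dual_adjmx x (E 1%N) = \sum_(i < D.+1)
      (ws + us * q ^ ((2 * i)%N%:Z - D%:Z) + vs * q ^ (D%:Z - (2 * i)%N%:Z))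
        *: dual_idem adj x i ->
  a ^+ 2 = u / v -> b ^+ 2 = us / vs ->
  let A := adjmx adj in
  let As := dual_adjmx x (E 1%N) in
  let Es := dual_idem adj x in
  let bA := normalize A w (a * v) in
  let bB := normalize As ws (b * vs) in
  (* every irreducible T-module is thin *)
  (forall U, irreducible A As U -> thin Es U) ->
  (* bold a = sum_psi a(psi) e_psi : acts on each irreducible W as a(W) *)
  (forall U, irreducible A As U -> forall z, inW U z ->
     ba *m z = aW D E Es q a U *: z) ->
  (* bold b = sum_psi b(psi) e_psi *)
  (forall U, irreducible A As U -> forall z, inW U z ->
     bb *m z = bW D Es q b U *: z) ->
  (* bold c = sum_psi c(psi) e_psi, c(psi) a root of xi^2 - kappa xi + 1 *)
  (forall U, irreducible A As U -> exists2 c : CC,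
     c ^+ 2 - kappa D E Es q a b bA U * c + 1 = 0 &
     forall z, inW U z -> bc *m z = c *: z) ->
  (* Lambda = sum_psi q^{d(psi)+1} e_psi *)
  (forall U, irreducible A As U -> forall z, inW U z ->
     bL *m z = q ^+ (mod_diameter D Es U).+1 *: z) ->
  (* bold C in T satisfying the three equations *)
  inT A As bC ->
  bA + (q ^+ 2 - q ^- 2)^-1 *: (q *: (bB *m bC) - q^-1 *: (bC *m bB)) =
    (q + q^-1)^-1 *: ((ba + invmx ba) *m (bL + invmx bL)
                      + (bb + invmx bb) *m (bc + invmx bc)) ->
  bB + (q ^+ 2 - q ^- 2)^-1 *: (q *: (bC *m bA) - q^-1 *: (bA *m bC)) =
    (q + q^-1)^-1 *: ((bb + invmx bb) *m (bL + invmx bL)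
                      + (bc + invmx bc) *m (ba + invmx ba)) ->
  bC + (q ^+ 2 - q ^- 2)^-1 *: (q *: (bA *m bB) - q^-1 *: (bB *m bA)) =
    (q + q^-1)^-1 *: ((bc + invmx bc) *m (bL + invmx bL)
                      + (ba + invmx ba) *m (bb + invmx bb)) ->
  [/\ central_in_T A As
        (bA + (q ^+ 2 - q ^- 2)^-1 *: (q *: (bB *m bC) - q^-1 *: (bC *m bB))),
      central_in_T A As
        (bB + (q ^+ 2 - q ^- 2)^-1 *: (q *: (bC *m bA) - q^-1 *: (bA *m bC)))
    & central_in_T A As
        (bC + (q ^+ 2 - q ^- 2)^-1 *: (q *: (bA *m bB) - q^-1 *: (bB *m bA)))].
Proof.
move=> graph _ _ _ _ _ _ q0 _ u0 us0 v0 vs0 _ _ ha hb A As Es bA bB _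
  hba hbb hbc hbL hC eqA eqB eqC.
have inT_trmxC := @inT_adjmx_trmxC n adj x (E 1%N) (proj1 graph).
have qz (z : int) : q ^ z != 0 by rewrite expfz_eq0 (negbTE q0) andbF.
have unit_ba : irr_scalar_unit A As ba.
  move=> U hU; exists (aW D E Es q a U); last exact: hba.
  by rewrite mulf_neq0 ?(neq0_of_sqr_eq_div ha).
have unit_bb : irr_scalar_unit A As bb.
  move=> U hU; exists (bW D Es q b U); last exact: hbb.
  by rewrite mulf_neq0 ?(neq0_of_sqr_eq_div hb).
have unit_bc : irr_scalar_unit A As bc.
  by move=> U hU; have [c /neq0_of_reciprocal_root c0 hbcU] := hbc U hU; exists c.
have unit_bL : irr_scalar_unit A As bL.
  move=> U hU; exists (q ^+ (mod_diameter D Es U).+1); last exact: hbL.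
  exact: expf_neq0.
have inT_bA : inT A As bA by apply/inT_normalize/inT_A.
have inT_bB : inT A As bB by apply/inT_normalize/inT_As.
split; apply: (central_of_irr_scalar inT_trmxC); try exact: inT_add_qcommutator.
- by rewrite eqA; apply: scalar_on_addV_combination.
- by rewrite eqB; apply: scalar_on_addV_combination.
- by rewrite eqC; apply: scalar_on_addV_combination.
Qed.
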